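(* Let $q=r^2$ with $r$ an odd prime power, $\theta$ a primitive element of $\mathbb{F}_q$, and $q-1=e_1f_1=e_2f_2$ with positive integers, where for some integer $l\geq 2$ we have $e_1\equiv 2^l\pmod{2^{l+1}}$ and $2^l\mid e_2$, and moreover $2e_2\mid e_1(r-1)$ and $e_1\mid e_2(r+1)$. Let $A=\langle\theta^{e_1}\rangle$, $B=\langle\theta^{e_2}\rangle$, $\beta=\theta^{e_2}$, $\gamma=\theta^{e_1/2}$, $D_1=\frac{e_1}{\gcd(e_1,e_2)}$, $D_2=\frac{e_2}{\gcd(e_1,e_2)}$. Let $1\leq s\leq D_1$, $1\leq t\leq D_2$, let $i_1,\dots,i_s$ be integers pairwise distinct modulo $D_1$ and $j_1,\dots,j_t$ integers pairwise distinct modulo $D_2$, and set $M=\bigcup_{\mu=1}^s\beta^{i_\mu}A$, $N=\bigcup_{\nu=1}^t\gamma^{2j_\nu+1}B$, $S=M\cup N$. Then $\eta(L_S(b))=(-1)^{\frac{(s-1)(r+1)}{2}}$ for every $b\in M$, and $\eta(L_S(b))=1$ for every $b\in N$.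
   Context: $\eta$ denotes the quadratic character of $\mathbb{F}_q^*$ ($\eta(x)=1$ if $x$ is a nonzero square, $-1$ otherwise). For a finite set $S\subseteq\mathbb{F}_q$ and $b\in S$, $L_S(b)=\prod_{c\in S,\,c\neq b}(b-c)$. $\langle x\rangle$ denotes the cyclic subgroup of $\mathbb{F}_q^*$ generated by $x$. *)

From mathcomp Require Import all_boot all_order all_algebra all_field.
Set Implicit Arguments. Unset Strict Implicit. Unset Printing Implicit Defensive.
Import GRing.Theory Num.Theory.
Local Open Scope ring_scope.

(* quadratic character eta of F^*, with eta 0 := 0 (never used at 0) *)
Definition eta (F : finFieldType) (x : F) : int :=
  if x == 0 then 0 else if [exists y : F, y ^+ 2 == x] then 1 else -1.

Definition LS (F : finFieldType) (S : {set F}) (b : F) : F :=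
  \prod_(c in S | c != b) (b - c).

(* cyclic subgroup <x> of F^* (as a subset of F); the order of x is < #|F| *)
Definition cycF (F : finFieldType) (x : F) : {set F} :=
  [set x ^+ (nat_of_ord k) | k : 'I_#|F|].

Definition cosetF (F : finFieldType) (y : F) (H : {set F}) : {set F} :=
  [set y * h | h in H].

From mathcomp Require Import all_boot all_order all_algebra all_field.
From mathcomp Require Import zify ring.
Import GRing.Theory Num.Theory.
Local Open Scope ring_scope.
Set Implicit Arguments. Unset Strict Implicit. Unset Printing Implicit Defensive.

(* For [q = r ^ 2], Euler's criterion reads [eta x = x ^ ((q - 1) / 2)], and
   [x ^ r = c * x] gives [x ^ ((q - 1) / 2) = c ^ ((r + 1) / 2)].  [S] is a
   disjoint union of cosets [y <z>] with [z] of order [f], and the part of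
   [L_S(b)] coming from one coset is [b ^ f - y ^ f] if [b] lies outside it and
   [f * b ^ (f - 1)] if [b] lies inside.  The divisibility conditions on [e1]
   and [e2] make the [f1]-th powers of [M] and the negated [f1]-th powers of [N]
   into [(r + 1) / 2]-th roots of unity [u], for which [u ^ r = u^-1], while the
   [f2]-th powers of [M] and [N] lie in [F_r].  So a factor [u - v] from another
   coset of [M] contributes [(-1) ^ ((r + 1) / 2)] when [b] is in [M], and every
   other factor contributes [1]. *)

Lemma exprz_exprn (R : unitRingType) (x : R) (k : int) m : (x ^ k) ^+ m = (x ^+ m) ^ k.
Proof. by rewrite !exprnP exprzAC. Qed.

Section PrimitiveRoots.
Variable R : fieldType.
Implicit Types (x y z : R) (f m : nat).

Lemma prim_root_neq0 f z : f.-primitive_root z -> z != 0.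
Proof.
move=> pz; apply/eqP => z0; move: (prim_expr_order pz).
by rewrite z0 expr0n gtn_eqF ?(prim_order_gt0 pz) // => /eqP; rewrite eq_sym oner_eq0.
Qed.

Lemma prim_root_half_neq1 m z : (2 * m).-primitive_root z -> z ^+ m != 1.
Proof.
move=> pz; have m_gt0 : (0 < m)%N by have := prim_order_gt0 pz; lia.
by rewrite -(prim_order_dvd pz); apply/negP => /dvdn_leq; lia.
Qed.

Lemma prim_root_half m z : (2 * m).-primitive_root z -> z ^+ m = -1.
Proof.
move=> pz; have : (z ^+ m) ^+ 2 == 1 by rewrite -exprM mulnC (prim_expr_order pz).
by rewrite sqrf_eq1 (negbTE (prim_root_half_neq1 pz)) => /eqP.
Qed.

Lemma prim_root_exprz_dvd f z (a b : int) :
  f.-primitive_root z -> z ^ a = z ^ b -> (f%:Z %| a - b)%Z.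
Proof.
move=> pz eq_ab; have z0 := prim_root_neq0 pz.
have : z ^ (a - b) = 1 by rewrite expfzDr // -invr_expz eq_ab mulfV // expfz_neq0.
case: (a - b) => k /=; first by rewrite -exprnP => /eqP; rewrite -(prim_order_dvd pz).
rewrite NegzE -exprnN => /eqP; rewrite invr_eq1 -(prim_order_dvd pz).
by rewrite dvdzE abszN absz_nat.
Qed.

Lemma prim_coset_inj f y z : f.-primitive_root z -> y != 0 ->
  injective (fun k : 'I_f => y * z ^+ k).
Proof.
move=> pz y0 k k' /= /(mulfI y0)/eqP.
by rewrite (eq_prim_root_expr pz) !modn_small // => /eqP/val_inj.
Qed.

Lemma prod_subr_prim_coset f x y z : f.-primitive_root z -> y != 0 ->
  \prod_(k < f) (x - y * z ^+ k) = x ^+ f - y ^+ f.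
Proof.
move=> pz y0; have := congr1 (horner^~ (x / y)) (factor_Xn_sub_1 pz).
rewrite horner_prod big_mkord !hornerE => eq_xy.
transitivity (\prod_(k < f) (y * (x / y - z ^+ k))).
  by apply: eq_bigr => k _; rewrite mulrBr mulrCA divff // mulr1.
rewrite big_split /= prodr_const card_ord.
under eq_bigr do rewrite -[_ - _](hornerXsubC _ (x / y)).
by rewrite eq_xy mulrBr exprMn mulrCA -exprMn divff // expr1n !mulr1.
Qed.

Lemma prod_one_subr_prim f z : f.+1.-primitive_root z ->
  \prod_(k < f) (1 - z ^+ k.+1) = f.+1%:R.
Proof.
move=> pz; have := factor_Xn_sub_1 pz.
rewrite big_mkord big_ord_recl /= expr0 polyC1 subrX1 => /mulfI eq_prod.
have {eq_prod} := congr1 (horner^~ 1) (eq_prod (negbT (polyXsubC_eq0 1))).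
rewrite horner_prod horner_sum => eq1.
transitivity (\prod_(k < f) ('X - (z ^+ bump 0 k)%:P).[1]).
  by apply: eq_bigr => k _; rewrite hornerXsubC.
by rewrite eq1; under eq_bigr do rewrite hornerXn expr1n; rewrite sumr_const card_ord.
Qed.
End PrimitiveRoots.

Section CyclotomicCosets.
Variable F : finFieldType.
Implicit Types (b c x y z : F) (C : {set F}) (f m : nat).

Lemma mem_cosetF_cycF c y z : c \in cosetF y (cycF z) -> exists k, c = y * z ^+ k.
Proof. by case/imsetP=> _ /imsetP[k _ ->] ->; exists k. Qed.

Lemma cosetF_cycF_id y z : y \in cosetF y (cycF z).
Proof.
have F_gt0 : (0 < #|F|)%N by apply/card_gt0P; exists y.
apply/imsetP; exists 1; last by rewrite mulr1.
by apply/imsetP; exists (Ordinal F_gt0).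
Qed.

Lemma cosetF_cycF_neq0 b y z : y != 0 -> z != 0 -> b \in cosetF y (cycF z) -> b != 0.
Proof. by move=> y0 z0 /mem_cosetF_cycF[k ->]; rewrite mulf_neq0 ?expf_neq0. Qed.

Lemma cosetF_cycF_exp c y z m : c \in cosetF y (cycF z) -> z ^+ m = 1 -> c ^+ m = y ^+ m.
Proof. by case/mem_cosetF_cycF=> k -> zm; rewrite exprMn exprAC zm expr1n mulr1. Qed.

Lemma prim_root_le_card f z : f.-primitive_root z -> (f <= #|F|)%N.
Proof.
by move=> pz; rewrite -[f]card_ord; apply: leq_card (prim_coset_inj pz (oner_neq0 F)).
Qed.

Lemma cosetF_cycF_prim f y z : f.-primitive_root z ->
  cosetF y (cycF z) = [set y * z ^+ k | k : 'I_f].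
Proof.
move=> pz; have f_gt0 := prim_order_gt0 pz.
apply/setP => c; apply/imsetP/imsetP.
- case=> _ /imsetP[k _ ->] ->.
  by exists (Ordinal (ltn_pmod k f_gt0)); rewrite //= prim_expr_mod.
- case=> k _ ->; exists (z ^+ k) => //.
  by apply/imsetP; exists (widen_ord (prim_root_le_card pz) k).
Qed.

Lemma cosetF_cycF_rebase f x y z : f.-primitive_root z ->
  x \in cosetF y (cycF z) -> cosetF x (cycF z) = cosetF y (cycF z).
Proof.
move=> pz; rewrite !(cosetF_cycF_prim _ pz) => /imsetP[k0 _ ->].
have f_gt0 := prim_order_gt0 pz.
apply/setP => c; apply/imsetP/imsetP; case=> k _ ->.
- by exists (Ordinal (ltn_pmod (k0 + k) f_gt0)); rewrite //= prim_expr_mod // exprD mulrA.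
- exists (Ordinal (ltn_pmod (k + (f - k0)) f_gt0)) => //=.
  rewrite prim_expr_mod // -mulrA -exprD.
  have -> : (k0 + (k + (f - k0)) = k + f)%N by have := ltn_ord k0; lia.
  by rewrite exprD (prim_expr_order pz) mulr1.
Qed.

Lemma LS_neq0 C b : LS C b != 0.
Proof. by apply/prodf_neq0 => c /andP[_]; rewrite subr_eq0 eq_sym. Qed.

Lemma LS_notin C b : b \notin C -> LS C b = \prod_(c in C) (b - c).
Proof.
move=> bC; apply: eq_bigl => c; case: (boolP (c \in C)) => //= cC.
by apply: contraNneq bC => <-.
Qed.

Lemma LS_setU C1 C2 b : [disjoint C1 & C2] -> LS (C1 :|: C2) b = LS C1 b * LS C2 b.
Proof.
move=> dC; rewrite /LS !big_mkcondr -bigU //=.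
by apply: eq_bigl => c; rewrite !inE.
Qed.

Lemma LS_bigcup (I : finType) (C : I -> {set F}) b :
  (forall i j, i != j -> [disjoint C i & C j]) ->
  LS (\bigcup_i C i) b = \prod_i LS (C i) b.
Proof.
move=> dC; rewrite /LS big_mkcondr partition_disjoint_bigcup //.
by apply: eq_bigr => i _; rewrite big_mkcondr.
Qed.

Lemma LS_cosetF_notin f b y z : f.-primitive_root z -> y != 0 ->
  b \notin cosetF y (cycF z) -> LS (cosetF y (cycF z)) b = b ^+ f - y ^+ f.
Proof.
move=> pz y0 /LS_notin ->; rewrite (cosetF_cycF_prim _ pz) big_imset /=.
  exact: prod_subr_prim_coset.
by move=> k k' _ _; apply: prim_coset_inj.
Qed.

Lemma LS_cosetF_mem f b y z : f.-primitive_root z -> b != 0 ->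
  b \in cosetF y (cycF z) -> LS (cosetF y (cycF z)) b = f%:R * b ^+ f.-1.
Proof.
move=> pz b0 /(cosetF_cycF_rebase pz) <-.
rewrite /LS (cosetF_cycF_prim _ pz) big_mkcondr big_imset /=; last first.
  by move=> k k' _ _; apply: prim_coset_inj.
case: f pz => [|f] pz; first by have := prim_order_gt0 pz.
rewrite big_ord_recl /= expr0 mulr1 eqxx mul1r mulrC -(prod_one_subr_prim pz).
rewrite -[f in b ^+ f]card_ord -prodr_const -big_split /=.
apply: eq_bigr => k _; rewrite mulrBr mulr1.
suff -> : b * z ^+ (bump 0 k) != b by [].
rewrite -subr_eq0 -[X in _ - X]mulr1 -mulrBr mulf_eq0 (negbTE b0) /= subr_eq0.
rewrite -(prim_order_dvd pz) /bump add1n; apply/negP => /dvdn_leq; have := ltn_ord k; lia.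
Qed.
End CyclotomicCosets.

Section EulerCriterion.
Variables (F : finFieldType) (r : nat).
Hypothesis r_odd : odd r.
Implicit Types (b c u v x y z : F) (f k m : nat).

Local Notation h := ((r + 1) %/ 2)%N.

(* Euler's criterion power [x ^+ ((q - 1) / 2)] for [q = r ^ 2]. *)
Definition euler_pow x := x ^+ ((r - 1) * h).

Lemma h_double : (r.+1 = h * 2)%N.
Proof. by rewrite addn1 divnK // dvdn2 /= r_odd. Qed.

Lemma sqr_pred_odd : (r ^ 2).-1 = (2 * ((r - 1) * h))%N.
Proof.
rewrite [(2 * _)%N]mulnCA [(2 * h)%N]mulnC -h_double.
have r_gt0 : (0 < r)%N by case: r r_odd.
nia.
Qed.

Lemma euler_powM x y : euler_pow (x * y) = euler_pow x * euler_pow y.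
Proof. exact: exprMn. Qed.

Lemma euler_pow_prod (I : Type) (s : seq I) (P : pred I) (G : I -> F) :
  euler_pow (\prod_(i <- s | P i) G i) = \prod_(i <- s | P i) euler_pow (G i).
Proof. by rewrite /euler_pow prodrXl. Qed.

Lemma euler_pow_exp x m : euler_pow (x ^+ m) = euler_pow x ^+ m.
Proof. exact: exprAC. Qed.

Lemma euler_pow_expz x (k : int) : euler_pow (x ^ k) = euler_pow x ^ k.
Proof. by rewrite /euler_pow !exprnP exprzAC. Qed.

Section Generator.
Hypothesis card_F : #|F| = (r ^ 2)%N.
Variable theta : F.
Hypothesis theta_prim : ((r ^ 2).-1).-primitive_root theta.

Lemma theta_half : theta ^+ ((r - 1) * h) = -1.
Proof. by apply: prim_root_half; rewrite -sqr_pred_odd. Qed.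

Lemma neg1_neq1 : (-1 : F) != 1.
Proof. by rewrite -theta_half; apply: prim_root_half_neq1; rewrite -sqr_pred_odd. Qed.

Lemma euler_pow_theta m : euler_pow (theta ^+ m) = (-1) ^+ m.
Proof. by rewrite euler_pow_exp /euler_pow theta_half. Qed.

Lemma theta_exp_surj x : x != 0 -> exists m, x = theta ^+ m.
Proof.
move=> x0; suff /(prim_rootP theta_prim)[m ->] : x ^+ (r ^ 2).-1 = 1 by exists m.
apply: (mulIf x0); rewrite mul1r -exprSr prednK -?card_F ?expf_card //.
by apply/card_gt0P; exists x.
Qed.

Lemma eta_theta_exp m : eta (theta ^+ m) = (-1) ^+ m.
Proof.
have th0 := prim_root_neq0 theta_prim.
rewrite /eta expf_eq0 (negbTE th0) andbF -signr_odd.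
case odd_m: (odd m); case: existsP => //.
- case=> y /eqP sq_y; have y0 : y != 0.
    by apply: contraTneq (expf_neq0 m th0) => y0; rewrite negbK -sq_y y0 expr0n.
  have [k yk] := theta_exp_surj y0.
  move: (congr1 euler_pow sq_y); rewrite yk euler_pow_exp !euler_pow_theta -exprM.
  rewrite -[_ ^+ (k * 2)]signr_odd -[_ ^+ m]signr_odd oddM andbF odd_m => /eqP.
  by rewrite eq_sym (negbTE neg1_neq1).
- case; exists (theta ^+ m./2); apply/eqP; rewrite -exprM.
  by have := odd_double_half m; rewrite odd_m add0n -muln2 => ->.
Qed.

Lemma eta_euler_pow x k : x != 0 -> euler_pow x = (-1) ^+ k -> eta x = (-1) ^+ k.
Proof.
move=> x0; have [m ->] := theta_exp_surj x0.
rewrite euler_pow_theta eta_theta_exp -[LHS]signr_odd -[RHS]signr_odd => eq_sign.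
suff odd_mk : odd m = odd k by rewrite -[LHS]signr_odd odd_mk signr_odd.
move: eq_sign; case: (odd m); case: (odd k) => // /eqP.
  by rewrite (negbTE neg1_neq1).
by rewrite eq_sym (negbTE neg1_neq1).
Qed.
End Generator.

Section Frobenius.
Hypothesis r_pchar : [pchar F].-nat r.

Let r_gt0 : (0 < r)%N. Proof. by case: r r_odd. Qed.

Lemma frobD x y : (x + y) ^+ r = x ^+ r + y ^+ r.
Proof. exact: exprDn_pchar. Qed.

Lemma frobB x y : (x - y) ^+ r = x ^+ r - y ^+ r.
Proof. by rewrite frobD exprNn -signr_odd r_odd mulN1r. Qed.

Lemma frob_natr m : (m%:R : F) ^+ r = m%:R.
Proof.
elim: m => [|m IHm]; first by rewrite expr0n gtn_eqF.
by rewrite -addn1 natrD frobD IHm expr1n.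
Qed.

Lemma euler_pow_frob x c : x != 0 -> x ^+ r = c * x -> euler_pow x = c ^+ h.
Proof.
move=> x0 x_r; rewrite /euler_pow exprM; congr (_ ^+ _).
by apply: (mulIf x0); rewrite -x_r -exprSr subn1 prednK.
Qed.

Lemma euler_pow_frob_fixed x : x != 0 -> x ^+ r = x -> euler_pow x = 1.
Proof. by move=> x0 x_r; rewrite (@euler_pow_frob _ 1) ?mul1r ?expr1n. Qed.

Lemma euler_pow_N1 : euler_pow (-1) = 1.
Proof. by rewrite euler_pow_frob_fixed ?oppr_eq0 ?oner_eq0 // -signr_odd r_odd expr1. Qed.

Lemma euler_pow_natr_mul m x k : m%:R != 0 :> F -> euler_pow x = 1 ->
  euler_pow (m%:R * x ^+ k) = 1.
Proof.
move=> m0 ex; rewrite euler_powM euler_pow_exp ex expr1n mulr1.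
exact: euler_pow_frob_fixed (frob_natr m).
Qed.

Lemma root_unity_frob u : u ^+ h = 1 -> u != 0 /\ u ^+ r = u^-1.
Proof.
move=> u_h; have h_gt0 : (0 < h)%N by have := h_double; lia.
have u0 : u != 0.
  by apply: contra_eq_neq u_h => ->; rewrite expr0n gtn_eqF // eq_sym oner_eq0.
split=> //; apply: (mulIf u0).
by rewrite mulVf // -exprSr h_double exprM u_h expr1n.
Qed.

Lemma euler_pow_sub_roots u v : u ^+ h = 1 -> v ^+ h = 1 -> u != v ->
  euler_pow (u - v) = (-1) ^+ h.
Proof.
move=> u_h v_h uv; have [u0 u_r] := root_unity_frob u_h; have [v0 v_r] := root_unity_frob v_h.
rewrite (@euler_pow_frob _ (- (u * v)^-1)) ?subr_eq0 //.
  by rewrite [LHS]exprNn exprVn exprMn u_h v_h !mulr1 invr1 mulr1.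
by rewrite frobB u_r v_r; field; apply/andP.
Qed.

Lemma euler_pow_add_roots u v : u ^+ h = 1 -> v ^+ h = 1 -> u + v != 0 ->
  euler_pow (u + v) = 1.
Proof.
move=> u_h v_h uv0; have [u0 u_r] := root_unity_frob u_h; have [v0 v_r] := root_unity_frob v_h.
rewrite (@euler_pow_frob _ (u * v)^-1) //.
  by rewrite exprVn exprMn u_h v_h mulr1 invr1.
by rewrite frobD u_r v_r; field; apply/andP.
Qed.

Lemma euler_pow_LS_cosetF_mem f b y z : f.-primitive_root z -> b != 0 ->
  b \in cosetF y (cycF z) -> euler_pow b = 1 -> euler_pow (LS (cosetF y (cycF z)) b) = 1.
Proof.
move=> pz b0 bC eb; rewrite (LS_cosetF_mem pz b0 bC).
exact: euler_pow_natr_mul (prim_root_natf_neq0 pz) eb.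
Qed.

Section CosetNotin.
Variables (f : nat) (b y z : F).
Hypotheses (pz : f.-primitive_root z) (y0 : y != 0) (bC : b \notin cosetF y (cycF z)).

Let LS_nz : b ^+ f - y ^+ f != 0.
Proof. by rewrite -(LS_cosetF_notin pz y0 bC) LS_neq0. Qed.

Lemma euler_pow_LS_cosetF_frob :
  (b ^+ f) ^+ r = b ^+ f -> (y ^+ f) ^+ r = y ^+ f ->
  euler_pow (LS (cosetF y (cycF z)) b) = 1.
Proof.
move=> b_r y_r; rewrite (LS_cosetF_notin pz y0 bC).
by apply: euler_pow_frob_fixed LS_nz _; rewrite frobB b_r y_r.
Qed.

Lemma euler_pow_LS_cosetF_roots :
  (b ^+ f) ^+ h = 1 -> (y ^+ f) ^+ h = 1 ->
  euler_pow (LS (cosetF y (cycF z)) b) = (-1) ^+ h.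
Proof.
move=> b_h y_h; rewrite (LS_cosetF_notin pz y0 bC).
by apply: euler_pow_sub_roots b_h y_h _; rewrite -subr_eq0.
Qed.

Lemma euler_pow_LS_cosetF_roots_opp :
  (- b ^+ f) ^+ h = 1 -> (y ^+ f) ^+ h = 1 ->
  euler_pow (LS (cosetF y (cycF z)) b) = 1.
Proof.
move=> b_h y_h; rewrite (LS_cosetF_notin pz y0 bC).
have -> : b ^+ f - y ^+ f = -1 * (- b ^+ f + y ^+ f) by rewrite mulN1r opprD opprK.
rewrite euler_powM euler_pow_N1 mul1r euler_pow_add_roots //.
by rewrite -oppr_eq0 opprD opprK LS_nz.
Qed.
End CosetNotin.
End Frobenius.
End EulerCriterion.

Lemma modn_pow2_odd m l : (m %% 2 ^ l.+1 = 2 ^ l)%N -> exists2 o, odd o & m = (2 ^ l * o)%N.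
Proof.
move=> m_mod; exists (2 * (m %/ 2 ^ l.+1)).+1; first by rewrite /= oddM.
by rewrite {1}(divn_eq m (2 ^ l.+1)) m_mod expnS; ring.
Qed.

Section CosetUnion.
Variables (F : finFieldType) (r : nat) (theta : F) (e1 f1 e2 f2 l o : nat).
Hypotheses (r_pchar : [pchar F].-nat r) (r_odd : odd r).
Hypothesis theta_prim : ((r ^ 2).-1).-primitive_root theta.
Hypotheses (e1f1 : (r ^ 2).-1 = (e1 * f1)%N) (e2f2 : (r ^ 2).-1 = (e2 * f2)%N).
Hypotheses (l_ge2 : (2 <= l)%N) (o_odd : odd o) (e1_o : e1 = (2 ^ l * o)%N).
Hypothesis e2_2l : (2 ^ l %| e2)%N.
Hypotheses (e2_e1 : (2 * e2 %| e1 * (r - 1))%N) (e1_e2 : (e1 %| e2 * (r + 1))%N).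
Variables (s t : nat) (i : 'I_s -> int) (j : 'I_t -> int).
Hypothesis i_inj : forall mu nu, (i mu = i nu %[mod (e1 %/ gcdn e1 e2)%N])%Z -> mu = nu.
Hypothesis j_inj : forall mu nu, (j mu = j nu %[mod (e2 %/ gcdn e1 e2)%N])%Z -> mu = nu.

Local Notation n := (r ^ 2).-1.
Local Notation h := ((r + 1) %/ 2)%N.
Local Notation alpha := (theta ^+ e1).
Local Notation beta := (theta ^+ e2).
Local Notation gamma := (theta ^+ (e1 %/ 2)).
Local Notation M := (\bigcup_(mu < s) cosetF (beta ^ i mu) (cycF alpha)).
Local Notation N := (\bigcup_(nu < t) cosetF (gamma ^ (2 * j nu + 1)) (cycF beta)).
Local Notation ep := (euler_pow r).
(* [x ^+ T] is [1] on [M] and [-1] on [N]: it separates the two families. *)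
Local Notation T := (n %/ 2 ^ l)%N.

Let n_gt0 : (0 < n)%N. Proof. exact: prim_order_gt0 theta_prim. Qed.
Let f1_gt0 : (0 < f1)%N. Proof. by move: n_gt0; rewrite e1f1 muln_gt0 => /andP[]. Qed.
Let f2_gt0 : (0 < f2)%N. Proof. by move: n_gt0; rewrite e2f2 muln_gt0 => /andP[]. Qed.
Let theta0 : theta != 0. Proof. exact: prim_root_neq0 theta_prim. Qed.

Lemma e1_half : (e1 %/ 2 = 2 ^ l.-1 * o)%N.
Proof. by rewrite e1_o -(prednK (ltnW l_ge2)) expnS -mulnA mulKn. Qed.

Lemma theta_exp_eq1 m : (n %| m)%N -> theta ^+ m = 1.
Proof. by rewrite (prim_order_dvd theta_prim) => /eqP. Qed.

Lemma alpha_prim : f1.-primitive_root alpha.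
Proof.
rewrite -[e1](mulnK e1 f1_gt0) -e1f1.
by apply: (dvdn_prim_root theta_prim); rewrite e1f1 dvdn_mull.
Qed.

Lemma beta_prim : f2.-primitive_root beta.
Proof.
rewrite -[e2](mulnK e2 f2_gt0) -e2f2.
by apply: (dvdn_prim_root theta_prim); rewrite e2f2 dvdn_mull.
Qed.

Lemma beta_f1_prim : (e1 %/ gcdn e1 e2).-primitive_root (beta ^+ f1).
Proof.
have := exp_prim_root theta_prim (e2 * f1); rewrite -exprM e1f1.
by rewrite -muln_gcdl divnMr // gcdnC.
Qed.

Lemma alpha_f2_prim : (e2 %/ gcdn e1 e2).-primitive_root (alpha ^+ f2).
Proof.
have := exp_prim_root theta_prim (e1 * f2); rewrite -exprM e2f2.
by rewrite -muln_gcdl divnMr.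
Qed.

Lemma e1_double : e1 = (2 * (e1 %/ 2))%N.
Proof. by rewrite e1_half mulnA -expnS prednK ?e1_o // ltnW. Qed.

Lemma beta_f1_h : (beta ^+ f1) ^+ h = 1.
Proof.
rewrite -!exprM; apply: theta_exp_eq1; rewrite e1f1 mulnCA [(e1 * f1)%N]mulnC dvdn_pmul2l //.
have co_2l_o : coprime (2 ^ l) o by rewrite coprimeXl // coprime_sym coprimen2.
rewrite e1_o Gauss_dvd // dvdn_mulr //=.
have : (o %| e2 * h * 2)%N.
  by apply: dvdn_trans (dvdn_mull (2 ^ l) (dvdnn o)) _; rewrite -e1_o -mulnA -(h_double r_odd) -addn1.
by rewrite Gauss_dvdl // coprimen2.
Qed.

Lemma gamma_f2_frob : (gamma ^+ f2) ^+ r = gamma ^+ f2.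
Proof.
have r_gt0 : (0 < r)%N by case: r r_odd.
have : (gamma ^+ f2) ^+ (r - 1) = 1.
  rewrite -!exprM; apply: theta_exp_eq1; rewrite e2f2 mulnCA [(e2 * f2)%N]mulnC dvdn_pmul2l //.
  by rewrite -(dvdn_pmul2l (isT : 0 < 2)%N) mulnA -e1_double.
by move=> g1; rewrite -[in LHS](subnK r_gt0) exprD g1 mul1r.
Qed.

Lemma alpha_f2_sqr : alpha ^+ f2 = (gamma ^+ f2) ^+ 2.
Proof. by rewrite -!exprM [(f2 * 2)%N]mulnC mulnA [(e1 %/ 2 * 2)%N]mulnC -e1_double. Qed.

Lemma alpha_f2_frob : (alpha ^+ f2) ^+ r = alpha ^+ f2.
Proof. by rewrite alpha_f2_sqr exprAC gamma_f2_frob. Qed.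

Lemma gamma_sqr : gamma ^+ 2 = alpha.
Proof. by rewrite -exprM mulnC -e1_double. Qed.

Lemma gamma_f1 : gamma ^+ f1 = -1.
Proof. by rewrite -exprM; apply: prim_root_half; rewrite mulnA -e1_double -e1f1. Qed.

Lemma n_2l : n = (2 ^ l * T)%N.
Proof. by rewrite mulnC divnK // (dvdn_trans e2_2l) // e2f2 dvdn_mulr. Qed.

Lemma alpha_T : alpha ^+ T = 1.
Proof. by rewrite -exprM; apply: theta_exp_eq1; rewrite e1_o mulnAC -n_2l dvdn_mulr. Qed.

Lemma beta_T : beta ^+ T = 1.
Proof.
rewrite -exprM; apply: theta_exp_eq1; case/dvdnP: e2_2l => c ->.
by rewrite -mulnA -n_2l dvdn_mull.
Qed.

Lemma gamma_T : gamma ^+ T = -1.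
Proof.
have half : theta ^+ (2 ^ l.-1 * T) = -1.
  by apply: prim_root_half; rewrite mulnA -expnS prednK ?(ltnW l_ge2) // -n_2l.
by rewrite -exprM e1_half mulnAC exprM half -signr_odd o_odd.
Qed.

Lemma euler_pow_theta_even m : (2 %| m)%N -> ep (theta ^+ m) = 1.
Proof. by rewrite dvdn2 (euler_pow_theta r_odd theta_prim) -signr_odd => /negbTE ->. Qed.

Lemma euler_pow_alpha : ep alpha = 1.
Proof. by rewrite euler_pow_theta_even // e1_double dvdn_mulr. Qed.

Lemma euler_pow_beta : ep beta = 1.
Proof.
by rewrite euler_pow_theta_even // (dvdn_trans _ e2_2l) // (dvdn_exp _ (dvdnn 2)) // ltnW.
Qed.

Lemma euler_pow_gamma : ep gamma = 1.
Proof.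
rewrite euler_pow_theta_even // e1_half dvdn_mulr // (dvdn_exp _ (dvdnn 2)) //.
by rewrite -ltnS prednK // ltnW.
Qed.

Lemma gamma_odd_exp (x : int) : gamma ^ (2 * x + 1) = gamma * alpha ^ x.
Proof.
by rewrite expfzDr ?expf_neq0 // expr1z mulrC -exprz_exp -exprnP gamma_sqr.
Qed.

Section MCoset.
Variables (x : int) (b : F).
Hypothesis bM : b \in cosetF (beta ^ x) (cycF alpha).

Lemma Mcoset_exp_f1 : b ^+ f1 = (beta ^+ f1) ^ x.
Proof. by rewrite (cosetF_cycF_exp bM (prim_expr_order alpha_prim)) exprz_exprn. Qed.

Lemma Mcoset_f1_h : (b ^+ f1) ^+ h = 1.
Proof. by rewrite Mcoset_exp_f1 exprz_exprn beta_f1_h exp1rz. Qed.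

Lemma Mcoset_f2_frob : (b ^+ f2) ^+ r = b ^+ f2.
Proof.
case/mem_cosetF_cycF: bM => k ->.
rewrite exprMn exprz_exprn (prim_expr_order beta_prim) exp1rz mul1r.
by rewrite [alpha ^+ k ^+ f2]exprAC exprAC alpha_f2_frob.
Qed.

Lemma Mcoset_T : b ^+ T = 1.
Proof.
case/mem_cosetF_cycF: bM => k ->.
by rewrite exprMn exprz_exprn beta_T exp1rz mul1r [alpha ^+ k ^+ T]exprAC alpha_T expr1n.
Qed.

Lemma Mcoset_euler_pow : ep b = 1.
Proof.
case/mem_cosetF_cycF: bM => k ->.
rewrite euler_powM euler_pow_expz (euler_pow_exp r alpha) euler_pow_alpha euler_pow_beta.
by rewrite exp1rz expr1n mulr1.
Qed.
End MCoset.

Section NCoset.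
Variables (x : int) (b : F).
Hypothesis bN : b \in cosetF (gamma ^ (2 * x + 1)) (cycF beta).

Lemma Ncoset_exp_f2 : b ^+ f2 = gamma ^+ f2 * (alpha ^+ f2) ^ x.
Proof.
rewrite (cosetF_cycF_exp bN (prim_expr_order beta_prim)) gamma_odd_exp.
by rewrite exprMn exprz_exprn.
Qed.

Lemma Ncoset_f2_frob : (b ^+ f2) ^+ r = b ^+ f2.
Proof. by rewrite Ncoset_exp_f2 exprMn gamma_f2_frob exprz_exprn alpha_f2_frob. Qed.

Lemma Ncoset_f1_h : (- b ^+ f1) ^+ h = 1.
Proof.
case/mem_cosetF_cycF: bN => k ->; rewrite gamma_odd_exp !exprMn exprz_exprn.
rewrite gamma_f1 (prim_expr_order alpha_prim) exp1rz mulr1 mulN1r opprK.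
by rewrite [beta ^+ k ^+ f1]exprAC [_ ^+ k ^+ h]exprAC beta_f1_h expr1n.
Qed.

Lemma Ncoset_T : b ^+ T = -1.
Proof.
case/mem_cosetF_cycF: bN => k ->; rewrite gamma_odd_exp !exprMn exprz_exprn.
by rewrite gamma_T alpha_T exp1rz mulr1 [beta ^+ k ^+ T]exprAC beta_T expr1n mulr1.
Qed.

Lemma Ncoset_euler_pow : ep b = 1.
Proof.
case/mem_cosetF_cycF: bN => k ->; rewrite gamma_odd_exp !euler_powM euler_pow_expz.
rewrite (euler_pow_exp r beta) euler_pow_alpha euler_pow_beta euler_pow_gamma.
by rewrite exp1rz expr1n !mulr1.
Qed.
End NCoset.

Lemma Mcosets_disjoint mu mu' : mu != mu' ->
  [disjoint cosetF (beta ^ i mu) (cycF alpha) & cosetF (beta ^ i mu') (cycF alpha)].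
Proof.
move=> neq_mu; rewrite disjoint_subset; apply/subsetP => c c_mu; rewrite inE.
apply: contra neq_mu => c_mu'; apply/eqP/i_inj/eqP; rewrite eqz_mod_dvd.
by apply: (prim_root_exprz_dvd beta_f1_prim); rewrite -(Mcoset_exp_f1 c_mu) (Mcoset_exp_f1 c_mu').
Qed.

Lemma Ncosets_disjoint nu nu' : nu != nu' ->
  [disjoint cosetF (gamma ^ (2 * j nu + 1)) (cycF beta) &
             cosetF (gamma ^ (2 * j nu' + 1)) (cycF beta)].
Proof.
move=> neq_nu; rewrite disjoint_subset; apply/subsetP => c c_nu; rewrite inE.
apply: contra neq_nu => c_nu'; apply/eqP/j_inj/eqP; rewrite eqz_mod_dvd.
apply: (prim_root_exprz_dvd alpha_f2_prim); apply: (@mulfI _ (gamma ^+ f2)).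
  by rewrite !expf_neq0.
by rewrite -(Ncoset_exp_f2 c_nu) (Ncoset_exp_f2 c_nu').
Qed.

Lemma M_N_disjoint : [disjoint M & N].
Proof.
rewrite disjoint_subset; apply/subsetP => c /bigcupP[mu _ c_mu]; rewrite inE.
apply/negP => /bigcupP[nu _ c_nu]; move: (Ncoset_T c_nu).
by rewrite (Mcoset_T c_mu) => /eqP; rewrite eq_sym (negbTE (neg1_neq1 r_odd theta_prim)).
Qed.

Lemma LS_MN b : LS (M :|: N) b =
  (\prod_(mu < s) LS (cosetF (beta ^ i mu) (cycF alpha)) b) *
  \prod_(nu < t) LS (cosetF (gamma ^ (2 * j nu + 1)) (cycF beta)) b.
Proof.
rewrite LS_setU ?M_N_disjoint // !LS_bigcup //.
- exact: Ncosets_disjoint.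
- exact: Mcosets_disjoint.
Qed.

Lemma euler_pow_LS_M b : b \in M -> ep (LS (M :|: N) b) = (-1) ^+ (h * (s - 1)).
Proof.
move=> bM; have bN : b \notin N by rewrite (disjointFr M_N_disjoint bM).
case/bigcupP: bM => mu0 _ b_mu0.
have b0 : b != 0 by apply: (cosetF_cycF_neq0 _ _ b_mu0); rewrite ?expfz_neq0 ?expf_neq0.
rewrite LS_MN euler_powM !euler_pow_prod [X in _ * X]big1 ?mulr1 => [|nu _]; last first.
  apply: (euler_pow_LS_cosetF_frob r_odd r_pchar beta_prim).
  - by rewrite expfz_neq0 // expf_neq0.
  - by apply: contra bN => b_nu; apply/bigcupP; exists nu.
  - exact: Mcoset_f2_frob b_mu0.
  - exact: Ncoset_f2_frob (cosetF_cycF_id _ _).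
rewrite (bigD1 mu0) //= (euler_pow_LS_cosetF_mem r_odd r_pchar alpha_prim b0 b_mu0) ?mul1r;
  last exact: Mcoset_euler_pow b_mu0.
rewrite (eq_bigr (fun=> (-1 : F) ^+ h)) => [|mu neq_mu]; last first.
  apply: (euler_pow_LS_cosetF_roots r_odd r_pchar alpha_prim).
  - by rewrite expfz_neq0 // expf_neq0.
  - by rewrite (disjointFr (Mcosets_disjoint _) b_mu0) // eq_sym.
  - exact: Mcoset_f1_h b_mu0.
  - exact: Mcoset_f1_h (cosetF_cycF_id _ _).
transitivity ((-1 : F) ^+ h ^+ #|predC1 mu0|); first exact: prodr_const.
by rewrite cardC1 card_ord exprM subn1.
Qed.

Lemma euler_pow_LS_N b : b \in N -> ep (LS (M :|: N) b) = 1.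
Proof.
move=> bN; have bM : b \notin M by rewrite (disjointFl M_N_disjoint bN).
case/bigcupP: bN => nu0 _ b_nu0.
have b0 : b != 0 by apply: (cosetF_cycF_neq0 _ _ b_nu0); rewrite ?expfz_neq0 ?expf_neq0.
rewrite LS_MN euler_powM !euler_pow_prod big1 ?mul1r => [|mu _]; last first.
  apply: (euler_pow_LS_cosetF_roots_opp r_odd r_pchar alpha_prim).
  - by rewrite expfz_neq0 // expf_neq0.
  - by apply: contra bM => b_mu; apply/bigcupP; exists mu.
  - exact: Ncoset_f1_h b_nu0.
  - exact: Mcoset_f1_h (cosetF_cycF_id _ _).
rewrite (bigD1 nu0) //= (euler_pow_LS_cosetF_mem r_odd r_pchar beta_prim b0 b_nu0) ?mul1r;
  last exact: Ncoset_euler_pow b_nu0.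
apply: big1 => nu neq_nu; apply: (euler_pow_LS_cosetF_frob r_odd r_pchar beta_prim).
- by rewrite expfz_neq0 // expf_neq0.
- by rewrite (disjointFr (Ncosets_disjoint _) b_nu0) // eq_sym.
- exact: Ncoset_f2_frob b_nu0.
- exact: Ncoset_f2_frob (cosetF_cycF_id _ _).
Qed.
End CosetUnion.

Lemma prime_power_pchar_nat (F : finFieldType) (r : nat) :
  (exists p k : nat, [/\ prime p, (0 < k)%N & r = (p ^ k)%N]) -> #|F| = (r ^ 2)%N ->
  [pchar F].-nat r.
Proof.
case=> p [k [p_pr _ ->]] card_F.
have p_char : p \in [pchar F] by apply: (@card_finPcharP _ _ (k * 2)); rewrite // card_F expnM.
by rewrite pnatX (pnatE _ p_pr) p_char.
Qed.

Theorem mainTheorem6 (F : finFieldType) (r : nat)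
  (hr_pp : exists p k : nat, [/\ prime p, (0 < k)%N & r = (p ^ k)%N])
  (hr_odd : odd r)
  (hq : #|F| = (r ^ 2)%N)
  (theta : F) (htheta : ((r ^ 2).-1).-primitive_root theta)
  (e1 f1 e2 f2 : nat) (he1 : (0 < e1)%N) (hf1 : (0 < f1)%N)
  (he2 : (0 < e2)%N) (hf2 : (0 < f2)%N)
  (hef1 : (r ^ 2).-1 = (e1 * f1)%N) (hef2 : (r ^ 2).-1 = (e2 * f2)%N)
  (l : nat) (hl : (2 <= l)%N)
  (he1l : (e1 %% 2 ^ l.+1 = 2 ^ l)%N) (he2l : (2 ^ l %| e2)%N)
  (hdiv1 : (2 * e2 %| e1 * (r - 1))%N) (hdiv2 : (e1 %| e2 * (r + 1))%N)
  (s t : nat)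
  (hs : (1 <= s <= e1 %/ gcdn e1 e2)%N) (ht : (1 <= t <= e2 %/ gcdn e1 e2)%N)
  (i : 'I_s -> int) (j : 'I_t -> int)
  (hi : forall mu nu : 'I_s,
      (i mu = i nu %[mod (e1 %/ gcdn e1 e2)%N])%Z -> mu = nu)
  (hj : forall mu nu : 'I_t,
      (j mu = j nu %[mod (e2 %/ gcdn e1 e2)%N])%Z -> mu = nu) :
  let A := cycF (theta ^+ e1) in
  let B := cycF (theta ^+ e2) in
  let beta := theta ^+ e2 in
  let gamma := theta ^+ (e1 %/ 2) in
  let M := \bigcup_(mu < s) cosetF (beta ^ i mu) A in
  let N := \bigcup_(nu < t) cosetF (gamma ^ (2 * j nu + 1)) B in
  let S := M :|: N in
  (forall b, b \in M -> eta (LS S b) = (-1) ^+ (((s - 1) * (r + 1)) %/ 2)%N) /\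
  (forall b, b \in N -> eta (LS S b) = 1).
Proof.
move=> A B beta gamma M N S.
have r_pchar := prime_power_pchar_nat hr_pp hq.
have [o o_odd e1_o] := modn_pow2_odd he1l.
split=> b bS.
- apply: (eta_euler_pow hr_odd hq htheta (LS_neq0 _ _)).
  rewrite addn1 (h_double hr_odd) mulnA mulnK // mulnC.
  exact: (euler_pow_LS_M r_pchar hr_odd htheta hef1 hef2 hl o_odd e1_o he2l hdiv1 hdiv2 hi hj bS).
- rewrite -(expr0 (-1)); apply: (eta_euler_pow hr_odd hq htheta (LS_neq0 _ _)).
  exact: (euler_pow_LS_N r_pchar hr_odd htheta hef1 hef2 hl o_odd e1_o he2l hdiv1 hdiv2 hi hj bS).
Qed.
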